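(* Let $\widetilde{A}$ be a $\Lambda$-standard weight algebra over the DVR $\mathcal{O}$, let $\widetilde{N}$ be an $\widetilde{A}$-lattice, $\lambda\in\Lambda$ and $v\in\widetilde{N}_\lambda$. (a) $v$ is $\lambda$-primitive if and only if $v\notin\widetilde{N}\cap\widetilde{N}'_K(\lambda)$ and $\mathcal{O}v+(\widetilde{N}\cap\widetilde{N}'_K(\lambda))$ is $\mathcal{O}$-pure in $\widetilde{N}$. (b) $v$ is strongly $\lambda$-primitive if and only if there is a non-negative integer $i$ such that $v\in\widetilde{\operatorname{rad}}^i\widetilde{N}$, $v\notin\widetilde{N}\cap(\operatorname{rad}^{i+1}\widetilde{N}_K+\widetilde{N}'_K(\lambda))$, and $\mathcal{O}v+\widetilde{N}\cap(\operatorname{rad}^{i+1}\widetilde{N}_K+\widetilde{N}'_K(\lambda))$ is $\mathcal{O}$-pure in $\widetilde{N}$. (c) If $v$ is strongly $\lambda$-primitive, it is $\lambda$-primitive.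
   Context: $\mathcal{O}$ is a DVR with fraction field $K$ and residue field $k$. $\widetilde{A}$ is an $\mathcal{O}$-free finite $\mathcal{O}$-algebra with orthogonal idempotents $e_\nu$ ($\nu\in X$) summing to $1$ making it a $\Lambda$-standard weight algebra: for $\Lambda\subseteq X$ partially ordered, the irreducible $\widetilde{A}_K$-modules $L_K(\lambda)$ and $\widetilde{A}_k$-modules $L(\lambda)$ are both indexed by $\Lambda$, with $\dim e_\lambda L_K(\lambda)=\dim e_\lambda L(\lambda)=1$ and, for $\mu\in\Lambda$, $e_\mu L_K(\lambda)\ne0$ or $e_\mu L(\lambda)\neq0$ implies $\mu\le\lambda$. For a module $M$, $M_\nu=e_\nu M$. An $\widetilde{A}$-lattice is $\mathcal{O}$-finite and torsion-free; a submodule $\widetilde{S}\subseteq\widetilde{M}$ is pure if $\widetilde{M}/\widetilde{S}$ is torsion-free. $\operatorname{rad}^i\widetilde{N}_K=(\operatorname{rad}\widetilde{A}_K)^i\widetilde{N}_K$, $\widetilde{\operatorname{rad}}^i\widetilde{N}=\widetilde{N}\cap\operatorname{rad}^i\widetilde{N}_K$, $\operatorname{gr}\widetilde{N}=\bigoplus_i\widetilde{\operatorname{rad}}^i\widetilde{N}/\widetilde{\operatorname{rad}}^{i+1}\widetilde{N}$. $\widetilde{N}'_K(\lambda)$ is the $\widetilde{A}_K$-submodule of $\widetilde{N}_K$ generated by all $\mu$-weight vectors with $\mu\in\Lambda$, $\mu>\lambda$. $v\in\widetilde{N}_\lambda$ is $\lambda$-primitive if the image of $\mathcal{O}v$ in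 $\widetilde{N}/(\widetilde{N}\cap\widetilde{N}'_K(\lambda))$ is nonzero and pure. $v$ is strongly $\lambda$-primitive if for some $i\ge0$ with $v\in\widetilde{\operatorname{rad}}^i\widetilde{N}$, its class $[v]\in(\operatorname{gr}\widetilde{N})_i$ has the property that the image of $\mathcal{O}[v]$ in $\operatorname{gr}(\widetilde{N}/(\widetilde{N}\cap\widetilde{N}'_K(\lambda)))$ (under the natural map) is nonzero and pure. *)

From HB Require Import structures.
From mathcomp Require Import all_boot all_order all_algebra all_field.
Set Implicit Arguments. Unset Strict Implicit. Unset Printing Implicit Defensive.
Import GRing.Theory.
Local Open Scope ring_scope.

Definition is_DVR (O : idomainType) : Prop :=
  exists pi : O, pi != 0 /\ pi \isn't a GRing.unit /\
    forall x : O, x != 0 -> exists (u : O) (n : nat), u \is a GRing.unit /\ x = u * pi ^+ n.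

Definition is_fraction_field (O : idomainType) (K : fieldType)
    (iota : {rmorphism O -> K}) : Prop :=
  injective iota /\ forall x : K, exists a b : O, b != 0 /\ x = iota a / iota b.

(* k = O / m, m the maximal ideal (= the non-units of the local ring O). *)
Definition is_residue_field (O : idomainType) (k : fieldType)
    (r : {rmorphism O -> k}) : Prop :=
  (forall y : k, exists a : O, r a = y) /\
  forall a : O, r a = 0 <-> a \isn't a GRing.unit.

Definition O_submodule (O : idomainType) (K : fieldType) (iota : {rmorphism O -> K})
    (V : lmodType K) (S : V -> Prop) : Prop :=
  S 0 /\ (forall x y, S x -> S y -> S (x + y)) /\ (forall (c : O) x, S x -> S (iota c *: x)).

Definition O_pure (O : idomainType) (K : fieldType) (iota : {rmorphism O -> K})
    (V : lmodType K) (S T : V -> Prop) : Prop :=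
  forall (y : V) (c : O), S y -> c != 0 -> T (iota c *: y) -> T y.

(* The tilde-algebra  A~  is the O-order At inside A_K = K (x)_O A~ :
   an O-subalgebra of A_K having an O-basis which is also a K-basis of A_K. *)
Definition O_free_order (O : idomainType) (K : fieldType) (iota : {rmorphism O -> K})
    (AK : falgType K) (At : AK -> Prop) : Prop :=
  O_submodule iota At /\ At 1 /\ (forall a b, At a -> At b -> At (a * b)) /\
  exists bs : seq AK, (forall b, b \in bs -> At b) /\ basis_of fullv bs /\
    forall a, At a -> exists c : 'I_(size bs) -> O, a = \sum_(i < size bs) iota (c i) *: bs`_i.

Definition idempotent_decomposition (K : fieldType) (AK : falgType K) (At : AK -> Prop)
    (X : finType) (e : X -> AK) : Prop :=
  (forall x, At (e x)) /\ (forall x y, e x * e y = if x == y then e x else 0) /\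
  \sum_(x : X) e x = 1.

Definition is_AKmod (K : fieldType) (AK : falgType K) (M : vectType K)
    (rho : AK -> 'End(M)) : Prop :=
  (forall (c : K) (a b : AK), rho (c *: a + b) = c *: rho a + rho b) /\
  rho 1 = \1%VF /\ forall a b, rho (a * b) = (rho a \o rho b)%VF.

(* an A_k-module structure (A_k = k (x)_O A~) on a k-space M, given as an
   O-algebra map A~ -> End_k(M)  (O acting on End_k(M) through r) *)
Definition is_Akmod (O : idomainType) (K k : fieldType) (iota : {rmorphism O -> K})
    (r : {rmorphism O -> k}) (AK : falgType K) (At : AK -> Prop) (M : vectType k)
    (rho : AK -> 'End(M)) : Prop :=
  (forall a b, At a -> At b -> rho (a + b) = rho a + rho b) /\
  (forall (c : O) a, At a -> rho (iota c *: a) = r c *: rho a) /\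
  rho 1 = \1%VF /\ (forall a b, At a -> At b -> rho (a * b) = (rho a \o rho b)%VF).

(* submodules, irreducibility, isomorphism: the acting elements are those in P *)
Definition is_submod (K F : fieldType) (AK : falgType K) (P : AK -> Prop) (M : vectType F)
    (rho : AK -> 'End(M)) (U : {vspace M}) : Prop :=
  forall a, P a -> (rho a @: U <= U)%VS.

Definition irreducible_mod (K F : fieldType) (AK : falgType K) (P : AK -> Prop)
    (M : vectType F) (rho : AK -> 'End(M)) : Prop :=
  (fullv : {vspace M}) != 0%VS /\
  forall U : {vspace M}, is_submod P rho U -> U = 0%VS \/ U = fullv.

Definition mod_iso (K F : fieldType) (AK : falgType K) (P : AK -> Prop)
    (M1 M2 : vectType F) (rho1 : AK -> 'End(M1)) (rho2 : AK -> 'End(M2)) : Prop :=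
  exists f : 'Hom(M1, M2), lker f = 0%VS /\ limg f = fullv /\
    forall a, P a -> (f \o rho1 a = rho2 a \o f)%VF.

Definition allK (K : fieldType) (AK : falgType K) : AK -> Prop := fun _ => True.

Definition partial_order_on (X : finType) (Lam : {pred X}) (le : rel X) : Prop :=
  (forall x, x \in Lam -> le x x) /\
  (forall x y, x \in Lam -> y \in Lam -> le x y -> le y x -> x = y) /\
  (forall x y z, x \in Lam -> y \in Lam -> z \in Lam -> le x y -> le y z -> le x z).

Definition standard_weight_algebra (O : idomainType) (K k : fieldType)
    (iota : {rmorphism O -> K}) (r : {rmorphism O -> k})
    (AK : falgType K) (At : AK -> Prop) (X : finType) (e : X -> AK)
    (Lam : {pred X}) (le : rel X) : Prop :=
  partial_order_on Lam le /\
  (exists (LK : X -> vectType K) (rK : forall x, AK -> 'End(LK x)),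
     (forall l, l \in Lam ->
        is_AKmod (rK l) /\ irreducible_mod (@allK K AK) (rK l) /\
        \dim (limg (rK l (e l))) = 1%N /\
        forall m, m \in Lam -> limg (rK l (e m)) != 0%VS -> le m l) /\
     (forall l l', l \in Lam -> l' \in Lam ->
        mod_iso (@allK K AK) (rK l) (rK l') -> l = l') /\
     (forall (M : vectType K) (rho : AK -> 'End(M)),
        is_AKmod rho -> irreducible_mod (@allK K AK) rho ->
        exists2 l, l \in Lam & mod_iso (@allK K AK) rho (rK l))) /\
  (exists (Lk : X -> vectType k) (rk : forall x, AK -> 'End(Lk x)),
     (forall l, l \in Lam ->
        is_Akmod iota r At (rk l) /\ irreducible_mod At (rk l) /\
        \dim (limg (rk l (e l))) = 1%N /\
        forall m, m \in Lam -> limg (rk l (e m)) != 0%VS -> le m l) /\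
     (forall l l', l \in Lam -> l' \in Lam -> mod_iso At (rk l) (rk l') -> l = l') /\
     (forall (M : vectType k) (rho : AK -> 'End(M)),
        is_Akmod iota r At rho -> irreducible_mod At rho ->
        exists2 l, l \in Lam & mod_iso At rho (rk l))).

(* N (a subset of N_K) is an A~-lattice with K-span N_K; rho is the A_K-action on N_K *)
Definition is_lattice (O : idomainType) (K : fieldType) (iota : {rmorphism O -> K})
    (AK : falgType K) (At : AK -> Prop) (NK : vectType K) (rho : AK -> 'End(NK))
    (N : NK -> Prop) : Prop :=
  is_AKmod rho /\ O_submodule iota N /\ (forall a v, At a -> N v -> N (rho a v)) /\
  exists s : seq NK, (forall v, v \in s -> N v) /\ (<<s>>%VS = fullv) /\
    forall v, N v -> exists c : 'I_(size s) -> O, v = \sum_(i < size s) iota (c i) *: s`_i.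

Definition weight_space (K : fieldType) (AK : falgType K) (NK : vectType K)
    (rho : AK -> 'End(NK)) (N : NK -> Prop) (el : AK) (v : NK) : Prop :=
  exists w, N w /\ v = rho el w.

Definition left_ideal (K : fieldType) (AK : falgType K) (I : {vspace AK}) : Prop :=
  forall a x, x \in I -> a * x \in I.

Definition max_left_ideal (K : fieldType) (AK : falgType K) (I : {vspace AK}) : Prop :=
  left_ideal I /\ I != fullv /\
  forall I' : {vspace AK}, left_ideal I' -> (I <= I')%VS -> I' = I \/ I' = fullv.

Definition jac_rad (K : fieldType) (AK : falgType K) (a : AK) : Prop :=
  forall I, max_left_ideal I -> a \in I.

(* rad^i M_K = (rad A_K)^i M_K : the K-span of the vectors (a_1 ... a_i) m *)
Definition rad_pow (K : fieldType) (AK : falgType K) (M : vectType K)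
    (rho : AK -> 'End(M)) (i : nat) (w : M) : Prop :=
  exists s : seq M,
    (forall x, x \in s -> exists (as_ : seq AK) (m : M),
        size as_ = i /\ (forall a, a \in as_ -> jac_rad a) /\
        x = rho (\prod_(a <- as_) a) m) /\
    w \in <<s>>%VS.

Definition rad_pow_t (K : fieldType) (AK : falgType K) (M : vectType K)
    (rho : AK -> 'End(M)) (S : M -> Prop) (i : nat) (w : M) : Prop :=
  S w /\ rad_pow rho i w.

Definition gen_submod (K : fieldType) (AK : falgType K) (M : vectType K)
    (rho : AK -> 'End(M)) (U : {vspace M}) : {vspace M} :=
  (\sum_(a <- vbasis (fullv : {vspace AK})) (rho a @: U))%VS.

Definition Nprime (K : fieldType) (AK : falgType K) (X : finType) (e : X -> AK)
    (Lam : {pred X}) (le : rel X) (NK : vectType K) (rho : AK -> 'End(NK)) (l : X)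
    : {vspace NK} :=
  gen_submod rho (\sum_(m | (m \in Lam) && (le l m) && (m != l)) limg (rho (e m)))%VS.

(* concrete model of N_K / N'_K : the complement C of N'_K, with projection along N'_K *)
Definition quotK (K : fieldType) (NK : vectType K) (W : {vspace NK}) : vectType K :=
  subvs_of (W^C)%VS.

Definition qproj (K : fieldType) (NK : vectType K) (W : {vspace NK}) (v : NK)
    : quotK W :=
  vsproj (W^C)%VS (daddv_pi (W^C)%VS W v).

Definition qact (K : fieldType) (AK : falgType K) (NK : vectType K)
    (rho : AK -> 'End(NK)) (W : {vspace NK}) (a : AK) : 'End(quotK W) :=
  linfun (fun x : quotK W => qproj W (rho a (vsval x))).

Definition qlat (K : fieldType) (NK : vectType K) (W : {vspace NK}) (N : NK -> Prop)
    (x : quotK W) : Prop :=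
  exists v, N v /\ x = qproj W v.
Arguments qlat {K NK} W N x.

Definition primitive (O : idomainType) (K : fieldType) (iota : {rmorphism O -> K})
    (AK : falgType K) (X : finType) (e : X -> AK) (Lam : {pred X}) (le : rel X)
    (NK : vectType K) (rho : AK -> 'End(NK)) (N : NK -> Prop) (l : X) (v : NK) : Prop :=
  let W := Nprime e Lam le rho l in
  let x := qproj W v in
  x != 0 /\
  O_pure iota (qlat W N) (fun y => exists d : O, y = iota d *: x).

Definition strongly_primitive (O : idomainType) (K : fieldType) (iota : {rmorphism O -> K})
    (AK : falgType K) (X : finType) (e : X -> AK) (Lam : {pred X}) (le : rel X)
    (NK : vectType K) (rho : AK -> 'End(NK)) (N : NK -> Prop) (l : X) (v : NK) : Prop :=
  let W := Nprime e Lam le rho l in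
  let x := qproj W v in
  let radM := rad_pow_t (qact rho W) (qlat W N) in
  exists i : nat, rad_pow_t rho N i v /\
    (* [x] <> 0 in (gr M~)_i = rad~^i M~ / rad~^(i+1) M~ *)
    ~ radM i.+1 x /\
    (* O[x] is pure in (gr M~)_i *)
    (forall (y : quotK W) (c : O), radM i y -> c != 0 ->
       (exists d : O, radM i.+1 (iota c *: y - iota d *: x)) ->
       exists d : O, radM i.+1 (y - iota d *: x)).

From HB Require Import structures.
From mathcomp Require Import all_boot all_order all_algebra all_field.
Set Implicit Arguments. Unset Strict Implicit. Unset Printing Implicit Defensive.
Import GRing.Theory.
Local Open Scope ring_scope.

(* The projection p of N_K onto N_K / N'_K(lambda) (modelled by [qproj]) commutes with
   the action of A_K because N'_K(lambda) is an A_K-submodule; hence rad^j of the quotient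
   is the image of rad^j N_K + N'_K(lambda), and the quotient lattice is p(N~).  Purity of
   O p(v) + (p(N~) cap R) in p(N~) is the same as purity of O v + (N~ cap p^-1(R)) in N~:
   this is (a) for R = 0 and (b) for R = rad^(i+1).  For (c), if c y lies in O x then
   y = t x for some t in K, and purity in the graded piece gives y - d x in rad^(i+1) for
   some d in O; unless t = d, x itself would lie in rad^(i+1). *)

Lemma span_ind (K : fieldType) (V : vectType K) (P : V -> Prop) (s : seq V) :
  P 0 -> (forall x y, P x -> P y -> P (x + y)) -> (forall (c : K) x, P x -> P (c *: x)) ->
  (forall x, x \in s -> P x) -> forall y, y \in <<s>>%VS -> P y.
Proof.
move=> P0 PD PZ Ps y /(coord_span (X := in_tuple s)) ->.
apply: (big_ind P P0 PD) => i _; apply: PZ; apply: Ps; exact: mem_nth.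
Qed.

Section QuotientMap.
Variables (K : fieldType) (V : vectType K) (W : {vspace V}).

Lemma qproj_is_linear : linear (qproj W).
Proof. by move=> c x y; rewrite /qproj !linearP. Qed.

HB.instance Definition _ :=
  GRing.isLinear.Build K V (quotK W) _ (qproj W) qproj_is_linear.

Lemma qproj_eq0 x : (qproj W x == 0) = (x \in W).
Proof.
have dxW : (W^C :&: W = 0)%VS by rewrite capvC capv_compl.
have splitx : daddv_pi W^C W x + daddv_pi W W^C x = x.
  by rewrite daddv_pi_add // addvC addv_complf memvf.
apply/eqP/idP => [/(congr1 vsval) | Wx].
  by rewrite /= vsprojK ?memv_pi // => /= E; rewrite -splitx E add0r memv_pi.
apply: val_inj; rewrite /= vsprojK ?memv_pi //.
have := splitx; rewrite (daddv_pi_id (capv_compl W) Wx) => /(canRL (addrK x)).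
by rewrite subrr.
Qed.

Lemma qprojK : cancel vsval (qproj W).
Proof.
move=> y; rewrite /qproj daddv_pi_id ?vsvalK ?subvsP //.
by rewrite capvC capv_compl.
Qed.

Variables (AK : falgType K) (rho : AK -> 'End(V)).

Lemma qactE a x : qact rho W a x = qproj W (rho a (vsval x)).
Proof. exact: (lfunE (qproj W \o rho a \o vsval) x). Qed.

Lemma qproj_act a m :
  (forall w, w \in W -> rho a w \in W) -> qproj W (rho a m) = qact rho W a (qproj W m).
Proof.
move=> rhoaW; rewrite qactE; apply/eqP; rewrite -subr_eq0 -linearB /= qproj_eq0.
by rewrite -linearB rhoaW // -qproj_eq0 linearB /= qprojK subrr.
Qed.

End QuotientMap.

Section RadicalLayers.
Variables (K : fieldType) (AK : falgType K).

Section OneModule.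
Variables (M : vectType K) (rho : AK -> 'End(M)) (j : nat).

Lemma rad_pow0 : rad_pow rho j 0.
Proof. by exists [::]; split; last exact: mem0v. Qed.

Lemma rad_powD x y : rad_pow rho j x -> rad_pow rho j y -> rad_pow rho j (x + y).
Proof.
move=> [s1 [gen1 x_s1]] [s2 [gen2 y_s2]]; exists (s1 ++ s2); split.
  by move=> z; rewrite mem_cat => /orP [/gen1 | /gen2].
by rewrite span_cat; apply: memv_add.
Qed.

Lemma rad_powZ (c : K) x : rad_pow rho j x -> rad_pow rho j (c *: x).
Proof. by move=> [s [gen x_s]]; exists s; split => //; apply: memvZ. Qed.

Lemma rad_pow_gen (as_ : seq AK) m :
  size as_ = j -> (forall a, a \in as_ -> jac_rad a) ->
  rad_pow rho j (rho (\prod_(a <- as_) a) m).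
Proof.
move=> size_as rad_as; exists [:: rho (\prod_(a <- as_) a) m].
by split=> [_ /[!inE] /eqP -> | ]; [exists as_, m | exact: memv_span1].
Qed.

Lemma rad_pow_ind (P : M -> Prop) y :
  P 0 -> (forall x y, P x -> P y -> P (x + y)) -> (forall (c : K) x, P x -> P (c *: x)) ->
  (forall (as_ : seq AK) m, size as_ = j -> (forall a, a \in as_ -> jac_rad a) ->
     P (rho (\prod_(a <- as_) a) m)) ->
  rad_pow rho j y -> P y.
Proof.
move=> P0 PD PZ Pgen [s [gen y_s]]; apply: (span_ind P0 PD PZ _ y_s).
by move=> x /gen [as_ [m [size_as [rad_as ->]]]]; apply: Pgen.
Qed.

End OneModule.

Lemma rad_pow_succ (M : vectType K) (rho : AK -> 'End(M)) j y :
  (forall a b, rho (a * b) = (rho a \o rho b)%VF) ->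
  rad_pow rho j.+1 y -> rad_pow rho j y.
Proof.
move=> rhoM; apply: rad_pow_ind; [exact: rad_pow0 | exact: rad_powD | exact: rad_powZ |].
case/lastP=> [|as_ a] m //; rewrite size_rcons => -[size_as] rad_as.
rewrite -cats1 big_cat big_seq1 /= rhoM comp_lfunE; apply: rad_pow_gen => // b b_as.
by apply: rad_as; rewrite mem_rcons in_cons b_as orbT.
Qed.

Variables (M1 M2 : vectType K) (rho1 : AK -> 'End(M1)) (rho2 : AK -> 'End(M2)).
Variable f : {linear M1 -> M2}.
Hypothesis f_intertwines : forall a m, f (rho1 a m) = rho2 a (f m).

Lemma rad_pow_map j y : rad_pow rho1 j y -> rad_pow rho2 j (f y).
Proof.
move=> rad_y; apply: (rad_pow_ind (P := fun y => rad_pow rho2 j (f y)) _ _ _ _ rad_y).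
- by rewrite linear0; apply: rad_pow0.
- by move=> x z; rewrite linearD; apply: rad_powD.
- by move=> c x; rewrite linearZ; apply: rad_powZ.
- by move=> as_ m size_as rad_as; rewrite f_intertwines; apply: rad_pow_gen.
Qed.

Lemma rad_pow_lift (g : M2 -> M1) j x :
  cancel g f -> rad_pow rho2 j x -> exists2 y, rad_pow rho1 j y & x = f y.
Proof.
move=> gK rad_x.
apply: (rad_pow_ind (P := fun x => exists2 y, rad_pow rho1 j y & x = f y) _ _ _ _ rad_x).
- by exists 0; [apply: rad_pow0 | rewrite linear0].
- move=> _ _ [x1 rad_x1 ->] [x2 rad_x2 ->].
  by exists (x1 + x2); [apply: rad_powD | rewrite linearD].
- by move=> c _ [x1 rad_x1 ->]; exists (c *: x1); [apply: rad_powZ | rewrite linearZ].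
- move=> as_ m size_as rad_as; exists (rho1 (\prod_(a <- as_) a) (g m)).
    exact: rad_pow_gen.
  by rewrite f_intertwines gK.
Qed.

End RadicalLayers.

Section GeneratedSubmodule.
Variables (K : fieldType) (AK : falgType K) (M : vectType K) (rho : AK -> 'End(M)).
Hypothesis rho_mod : is_AKmod rho.

Lemma gen_submod_act (U : {vspace M}) c u : u \in U -> rho c u \in gen_submod rho U.
Proof.
move=> Uu; pose rhoL : {linear AK -> 'End(M)} :=
  HB.pack rho (GRing.isLinear.Build K AK 'End(M) _ rho rho_mod.1).
rewrite (coord_vbasis (memvf c)) -[rho]/(rhoL : AK -> _) linear_sum sum_lfunE.
apply: rpred_sum => i _; rewrite linearZ scale_lfunE; apply: memvZ.
have b_i : (vbasis fullv)`_i \in vbasis (fullv : {vspace AK}).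
  by rewrite mem_nth ?size_tuple.
rewrite /gen_submod (big_rem _ b_i) /=.
by apply: (subvP (addvSl _ _)); apply: memv_img.
Qed.

Lemma gen_submod_stable (U : {vspace M}) a w :
  w \in gen_submod rho U -> rho a w \in gen_submod rho U.
Proof.
have rhoM : forall a b, rho (a * b) = (rho a \o rho b)%VF by case: rho_mod => _ [].
move=> Gw; apply: (subvP _ _ (memv_img (rho a) Gw)).
rewrite {1}/gen_submod limg_sum.
apply: (big_ind (fun V => (V <= _)%VS)) => [|V1 V2 sV1 sV2|b _].
- exact: sub0v.
- by rewrite subv_add sV1.
- rewrite -limg_comp -rhoM; apply/subvP => _ /memv_imgP [u Uu ->].
  exact: gen_submod_act.
Qed.

End GeneratedSubmodule.

Definition rad_pow_plus (K : fieldType) (AK : falgType K) (M : vectType K)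
    (rho : AK -> 'End(M)) (W : {vspace M}) (j : nat) (u : M) : Prop :=
  exists y z, rad_pow rho j y /\ z \in W /\ u = y + z.

Lemma rad_pow_in_plus (K : fieldType) (AK : falgType K) (M : vectType K)
    (rho : AK -> 'End(M)) (W : {vspace M}) j u :
  rad_pow rho j u -> rad_pow_plus rho W j u.
Proof. by move=> rad_u; exists u, 0; rewrite addr0 mem0v. Qed.

Lemma rad_pow_plus_succ (K : fieldType) (AK : falgType K) (M : vectType K)
    (rho : AK -> 'End(M)) (W : {vspace M}) j u :
  (forall a b, rho (a * b) = (rho a \o rho b)%VF) ->
  rad_pow_plus rho W j.+1 u -> rad_pow_plus rho W j u.
Proof.
by move=> rhoM [y [z [rad_y Wz_u]]]; exists y, z; split=> //; apply: rad_pow_succ rad_y.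
Qed.

Lemma rad_pow_qproj (K : fieldType) (AK : falgType K) (M : vectType K)
    (rho : AK -> 'End(M)) (W : {vspace M}) j u :
  (forall a w, w \in W -> rho a w \in W) ->
  rad_pow (qact rho W) j (qproj W u) <-> rad_pow_plus rho W j u.
Proof.
move=> W_stable.
have intertw a m : qproj W (rho a m) = qact rho W a (qproj W m).
  exact: qproj_act (W_stable a).
split=> [/(rad_pow_lift intertw (@qprojK _ _ W)) [y rad_y /eqP] | [y [z [rad_y [Wz ->]]]]].
  rewrite -subr_eq0 -linearB qproj_eq0 => Wuy.
  by exists y, (u - y); do 2!split=> //; rewrite addrC subrK.
rewrite linearD /= (eqP (_ : qproj W z == 0)) ?qproj_eq0 // addr0.
exact: (rad_pow_map (f := qproj W) intertw rad_y).
Qed.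

Section PureSublattices.
Variables (O : idomainType) (K : fieldType) (iota : {rmorphism O -> K}).
Hypothesis iota_inj : injective iota.

Lemma iota_neq0 c : c != 0 -> iota c != 0.
Proof. by rewrite raddf_eq0. Qed.

Lemma O_pure_ext (V : lmodType K) (S S' T T' : V -> Prop) :
  (forall y, S y <-> S' y) -> (forall y, T y <-> T' y) ->
  O_pure iota S T <-> O_pure iota S' T'.
Proof.
move=> SS' TT'; split=> pure y c Sy c0 Tcy.
  by apply/(TT' y); apply: pure (proj2 (SS' y) Sy) c0 (proj2 (TT' _) Tcy).
by apply/(TT' y); apply: pure (proj1 (SS' y) Sy) c0 (proj1 (TT' _) Tcy).
Qed.

Lemma O_pure_of_relative (Q : lmodType K) (L S R : Q -> Prop) x :
  L 0 -> R 0 -> (forall (c : K) y, S y -> S (c *: y)) ->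
  (forall (c : K) y, R y -> R (c *: y)) ->
  L x -> S x -> ~ (L x /\ R x) ->
  O_pure iota (fun y => L y /\ S y)
    (fun z => exists d, L (z - iota d *: x) /\ R (z - iota d *: x)) ->
  x != 0 /\ O_pure iota L (fun y => exists d, y = iota d *: x).
Proof.
move=> L0 R0 SZ RZ Lx Sx xR pure; split; first by apply/eqP => x0; apply: xR; rewrite x0.
move=> y c Ly c0 [d cy]; have c0' := iota_neq0 c0.
set t := iota d / iota c.
have y_def : y = t *: x by rewrite /t mulrC -scalerA -cy scalerA mulVf ?scale1r.
have Sy : S y by rewrite y_def; apply: SZ.
have [|d' [_ Ryd]] := pure y c (conj Ly Sy) c0; first by exists d; rewrite cy subrr.
exists d'; case: (eqVneq t (iota d')) => [<- // | t_d'].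
have x_def : x = (t - iota d')^-1 *: (y - iota d' *: x).
  by rewrite y_def -scalerBl scalerA mulVf ?subr_eq0 // scale1r.
by exfalso; apply: xR; split=> //; rewrite x_def; apply: RZ.
Qed.

Variables (V Q : lmodType K) (N : V -> Prop).
Hypothesis N_sub : O_submodule iota N.

Lemma O_submoduleB x y : N x -> N y -> N (x - y).
Proof.
have [_ [ND NZ]] := N_sub; move=> Nx Ny; apply: ND => //.
by have := NZ (-1) y Ny; rewrite rmorphN1 scaleN1r.
Qed.

Lemma O_pure_image (f : {linear V -> Q}) (R : V -> Prop) (Rq S : Q -> Prop) v :
  N v -> (forall u, R u <-> Rq (f u)) -> (forall u, R u -> S (f u)) -> S (f v) ->
  (forall x y, S x -> S y -> S (x + y)) -> (forall (c : K) x, S x -> S (c *: x)) ->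
  O_pure iota (fun y => (exists w, N w /\ y = f w) /\ S y)
    (fun z => exists d, (exists w, N w /\ z - iota d *: f v = f w) /\ Rq (z - iota d *: f v))
  <-> O_pure iota N (fun w => exists d u, (N u /\ R u) /\ w = iota d *: v + u).
Proof.
move=> Nv R_Rq R_S Sv SD SZ; have [_ [_ NZ]] := N_sub.
split=> [pure y c Ny c0 [d [u [[Nu Ru] cy]]] | pure _ c [[w [Nw ->]] _] c0 [d [_ Rw]]].
- have fcy : iota c *: f y = iota d *: f v + f u by rewrite -linearZ_LR cy linearD linearZ_LR.
  have Sy : S (f y).
    have -> : f y = (iota c)^-1 *: (iota c *: f y).
      by rewrite scalerA mulVf ?scale1r ?iota_neq0.
    by rewrite fcy; apply/SZ/SD; [apply/SZ | apply/R_S].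
  have fu : iota c *: f y - iota d *: f v = f u by rewrite fcy addrAC subrr add0r.
  have [|d' [_ Ru']] := pure (f y) c (conj (ex_intro _ y (conj Ny erefl)) Sy) c0.
    by exists d; rewrite fu; split; [exists u | apply/R_Rq].
  exists d', (y - iota d' *: v); split; last by rewrite addrC subrK.
  split; first by apply: O_submoduleB => //; apply: NZ.
  by apply/R_Rq; rewrite linearB /= (linearZ_LR f).
- have [d' [u' [[Nu' Ru'] w_def]]] :
      exists d' u', (N u' /\ R u') /\ w = iota d' *: v + u'.
    apply: (pure w c Nw c0); exists d, (iota c *: w - iota d *: v).
    split; last by rewrite addrC subrK.
    split; first by apply: O_submoduleB; apply: NZ.
    by apply/R_Rq; rewrite linearB /= !(linearZ_LR f).
  exists d'; rewrite w_def linearD linearZ_LR addrAC subrr add0r.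
  by split; [exists u' | apply/R_Rq].
Qed.

End PureSublattices.

Definition primitive_wrt (O : idomainType) (K : fieldType) (iota : {rmorphism O -> K})
    (NK : vectType K) (N : NK -> Prop) (W : {vspace NK}) (v : NK) : Prop :=
  qproj W v != 0 /\ O_pure iota (qlat W N) (fun y => exists d : O, y = iota d *: qproj W v).

Definition strongly_primitive_wrt (O : idomainType) (K : fieldType)
    (iota : {rmorphism O -> K}) (AK : falgType K) (NK : vectType K)
    (rho : AK -> 'End(NK)) (N : NK -> Prop) (W : {vspace NK}) (v : NK) : Prop :=
  let radQ := rad_pow_t (qact rho W) (qlat W N) in
  exists i : nat, rad_pow_t rho N i v /\ ~ radQ i.+1 (qproj W v) /\
    O_pure iota (radQ i) (fun z => exists d : O, radQ i.+1 (z - iota d *: qproj W v)).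

Section Primitivity.
Variables (O : idomainType) (K : fieldType) (iota : {rmorphism O -> K}).
Variables (AK : falgType K) (NK : vectType K) (rho : AK -> 'End(NK)).
Variables (N : NK -> Prop) (W : {vspace NK}) (v : NK).
Hypotheses (iota_inj : injective iota) (N_sub : O_submodule iota N) (Nv : N v).

Lemma qlat0 : qlat W N 0.
Proof. by exists 0; rewrite linear0; split=> //; case: N_sub. Qed.

Lemma primitive_wrtP :
  primitive_wrt iota N W v <->
  ~ (N v /\ v \in W) /\
  O_pure iota N (fun w => exists (d : O) (z : NK), (N z /\ z \in W) /\ w = iota d *: v + z).
Proof.
have W_qproj u : u \in W <-> qproj W u = 0 by rewrite -qproj_eq0; split=> /eqP.
have image_iff := O_pure_image iota_inj N_sub (f := qproj W) (Rq := fun z => z = 0)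
  (S := fun _ => True) Nv W_qproj (fun _ _ => I) I (fun _ _ _ _ => I) (fun _ _ _ => I).
have line_iff : O_pure iota (qlat W N) (fun y => exists d : O, y = iota d *: qproj W v) <->
    O_pure iota (fun y => qlat W N y /\ True) (fun z => exists d : O,
      qlat W N (z - iota d *: qproj W v) /\ z - iota d *: qproj W v = 0).
  apply: O_pure_ext => y; first by split=> [|[]].
  split=> [[d ->] | [d [_ /eqP]]]; last by rewrite subr_eq0 => /eqP ->; exists d.
  by exists d; rewrite subrr; split=> //; apply: qlat0.
rewrite /primitive_wrt qproj_eq0; split=> -[notW pure]; split.
- by case=> _; apply/negP.
- exact/image_iff/line_iff.
- by apply/negP => /(conj Nv) /notW.
- exact/line_iff/image_iff.
Qed.

Hypotheses (rho_mod : is_AKmod rho) (W_stable : forall a w, w \in W -> rho a w \in W).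

Let rad_q j u : rad_pow (qact rho W) j (qproj W u) <-> rad_pow_plus rho W j u :=
  rad_pow_qproj j u W_stable.

Let rhoM : forall a b, rho (a * b) = (rho a \o rho b)%VF := rho_mod.2.2.

Lemma strongly_primitive_at_iff i :
  let radQ := rad_pow_t (qact rho W) (qlat W N) in
  rad_pow rho i v ->
  (~ radQ i.+1 (qproj W v) /\
   O_pure iota (radQ i) (fun z => exists d : O, radQ i.+1 (z - iota d *: qproj W v)))
  <-> (~ (N v /\ rad_pow_plus rho W i.+1 v) /\
   O_pure iota N (fun w => exists (d : O) (u : NK),
     (N u /\ rad_pow_plus rho W i.+1 u) /\ w = iota d *: v + u)).
Proof.
move=> radQ rad_v.
have R_S u : rad_pow_plus rho W i.+1 u -> rad_pow (qact rho W) i (qproj W u).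
  by move=> /(rad_pow_plus_succ rhoM) /rad_q.
have pure_iff := O_pure_image iota_inj N_sub (f := qproj W)
  (R := rad_pow_plus rho W i.+1) (Rq := rad_pow (qact rho W) i.+1)
  (S := rad_pow (qact rho W) i) Nv (fun u => iff_sym (rad_q _ u)) R_S
  (proj2 (rad_q _ _) (rad_pow_in_plus W rad_v)) (@rad_powD _ _ _ _ i) (@rad_powZ _ _ _ _ i).
split=> -[notR pure]; split.
- by move=> [_ /rad_q R_v]; apply: notR; split=> //; exists v.
- exact/pure_iff.
- by move=> [_ /rad_q R_v]; apply: notR.
- exact/pure_iff.
Qed.

Lemma strongly_primitive_wrtP :
  strongly_primitive_wrt iota rho N W v <->
  exists i : nat, rad_pow_t rho N i v /\
    ~ (N v /\ rad_pow_plus rho W i.+1 v) /\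
    O_pure iota N (fun w => exists (d : O) (u : NK),
      (N u /\ rad_pow_plus rho W i.+1 u) /\ w = iota d *: v + u).
Proof.
by split=> -[i [[_ rad_v] prim_i]]; exists i; split=> //;
  apply/(strongly_primitive_at_iff rad_v).
Qed.

Lemma strongly_primitive_wrt_primitive :
  strongly_primitive_wrt iota rho N W v -> primitive_wrt iota N W v.
Proof.
move=> [i [[_ rad_v] [notR pure]]].
apply: (O_pure_of_relative iota_inj _ _ _ _ _ _ notR pure).
- exact: qlat0.
- exact: rad_pow0.
- by move=> c y; apply: rad_powZ.
- by move=> c y; apply: rad_powZ.
- by exists v.
- by apply/rad_q; apply: rad_pow_in_plus.
Qed.

End Primitivity.

Theorem proposition4p4 (O : idomainType) (K k : fieldType)
    (iota : {rmorphism O -> K}) (r : {rmorphism O -> k})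
    (AK : falgType K) (At : AK -> Prop) (X : finType) (e : X -> AK)
    (Lam : {pred X}) (le : rel X)
    (NK : vectType K) (rho : AK -> 'End(NK)) (N : NK -> Prop)
    (l : X) (v : NK) :
  is_DVR O -> is_fraction_field iota -> is_residue_field r ->
  O_free_order iota At -> idempotent_decomposition At e ->
  standard_weight_algebra iota r At e Lam le ->
  is_lattice iota At rho N ->
  l \in Lam -> weight_space rho N (e l) v ->
  let NP := Nprime e Lam le rho l in
  (primitive iota e Lam le rho N l v <->
     ~ (N v /\ v \in NP) /\
     O_pure iota N (fun w => exists (d : O) (z : NK), (N z /\ z \in NP) /\ w = iota d *: v + z))
  /\
  (strongly_primitive iota e Lam le rho N l v <->
     exists i : nat, rad_pow_t rho N i v /\
       ~ (N v /\ exists y z, rad_pow rho i.+1 y /\ z \in NP /\ v = y + z) /\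
       O_pure iota N (fun w => exists (d : O) (u : NK),
          (N u /\ exists y z, rad_pow rho i.+1 y /\ z \in NP /\ u = y + z) /\
          w = iota d *: v + u))
  /\
  (strongly_primitive iota e Lam le rho N l v -> primitive iota e Lam le rho N l v).
Proof.
move=> _ [iota_inj _] _ _ [e_At _] _ [rho_mod [N_sub [N_act _]]] _ [w [Nw ->]] NP.
have Nv := N_act _ _ (e_At l) Nw.
have NP_stable a z : z \in NP -> rho a z \in NP by apply: gen_submod_stable.
split; first exact: primitive_wrtP iota_inj N_sub Nv.
split; first exact: strongly_primitive_wrtP iota_inj N_sub Nv rho_mod NP_stable.
exact: strongly_primitive_wrt_primitive iota_inj N_sub Nv NP_stable.
Qed.
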